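(* Let $\sum_{i=0}^\infty a_it^i\in\mathbb{C}_3[[t]]$ be a power series with integral coefficients ($v(a_i)\ge 0$ for all $i$), and let $f(t)=\sum_{i=0}^\infty\frac{a_i}{i+1}t^{i+1}$. If $v(a_0)=0$, $v(a_1)=0$, or $v(a_2)=0$, then $\mathrm{New}_{1/3}(f)\subset[1,3]$.
   Context: $\mathbb{C}_3$ is the completion of $\overline{\mathbb{Q}_3}$ with valuation $v$, $v(3)=1$, $v(0)=\infty$. For a positive rational $m$ and a power series $F(t)=\sum_{u\ge0}c_ut^u$, the Newton polygon $\mathrm{New}_m(F)\subset\mathbb{R}$ is the convex hull of the set of $u\in\mathbb{Z}_{\ge0}$ for which there exists $w\in\mathbb{Q}$ with $w\ge m$ such that $v(c_u)+wu=v(c_{u'})+wu'$ for some $u'\ne u$ and $v(c_u)+wu\le v(c_{u''})+wu''$ for all $u''\in\mathbb{Z}_{\ge0}$. *)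

From mathcomp Require Import all_boot all_order all_algebra.
Set Implicit Arguments. Unset Strict Implicit. Unset Printing Implicit Defensive.
Import Order.TTheory GRing.Theory Num.Theory.
Local Open Scope ring_scope.

(* v is a (rank-one, Q-valued) valuation on K with v(3) = 1; v is only
   meaningful on nonzero elements, v(0) = +oo by convention. *)
Definition valuation3 (K : fieldType) (v : K -> rat) : Prop :=
  [/\ forall x y : K, x != 0 -> y != 0 -> v (x * y) = v x + v y,
      forall x y : K, x != 0 -> y != 0 -> x + y != 0 ->
        Num.min (v x) (v y) <= v (x + y),
      (3%:R : K) != 0 & v 3%:R = 1].

(* "v(x) >= M" with the convention v(0) = +oo *)
Definition vge (K : fieldType) (v : K -> rat) (x : K) (M : rat) : Prop :=
  x = 0 \/ M <= v x.

Definition v_complete (K : fieldType) (v : K -> rat) : Prop :=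
  forall s : nat -> K,
    (forall M : rat, exists N : nat, forall m n : nat,
        (N <= m)%N -> (N <= n)%N -> vge v (s m - s n) M) ->
    exists l : K, forall M : rat, exists N : nat, forall n : nat,
        (N <= n)%N -> vge v (s n - l) M.

(* v(c) + w u in Q u {+oo}, None standing for +oo *)
Definition vt (K : fieldType) (v : K -> rat) (c : K) (w : rat) (u : nat)
  : option rat := if c == 0 then None else Some (v c + w * u%:R).

Definition ole (x y : option rat) : bool :=
  match x, y with
  | _, None => true
  | None, Some _ => false
  | Some a, Some b => a <= b
  end.

Definition newton_pt (K : fieldType) (v : K -> rat) (m : rat) (F : nat -> K)
  (u : nat) : Prop :=
  exists w : rat, m <= w /\
    (exists u' : nat, u' <> u /\ vt v (F u) w u = vt v (F u') w u') /\
    (forall u'' : nat, ole (vt v (F u) w u) (vt v (F u'') w u'')).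

(* New_m(F): convex hull (in one dimension: convex combinations of two
   points) of the set above; membership of a rational point x. *)
Definition Newton (K : fieldType) (v : K -> rat) (m : rat) (F : nat -> K)
  (x : rat) : Prop :=
  exists u1 u2 : nat, exists t : rat,
    [/\ newton_pt v m F u1, newton_pt v m F u2, 0 <= t <= 1 &
        x = t * u1%:R + (1 - t) * u2%:R].

Definition integ (K : fieldType) (a : nat -> K) : nat -> K :=
  fun n => match n with 0 => 0 | i.+1 => a i / (i.+1)%:R end.

(* The coefficient c_u = a_(u-1)/u of f has valuation at least -v_3(u), with
   equality -v_3(j+1) at the index j <= 2 where a_j is a unit.  The valuation
   on K restricts to the 3-adic valuation on positive integers, so for u >= 4
   the point (u, v(c_u)) lies strictly above every line of slope -w, w >= 1/3,
   through (j+1, v(c_(j+1))): this is the inequality 3 v_3(u) + 2 < u.  Hence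
   only the indices 1, 2, 3 can realise the minimum of v(c_u) + w u. *)
From mathcomp Require Import all_boot all_order all_algebra.
From mathcomp Require Import lra zify.
Set Implicit Arguments. Unset Strict Implicit. Unset Printing Implicit Defensive.
Import Order.TTheory GRing.Theory Num.Theory.
Local Open Scope ring_scope.

Section Valuation.
Variables (K : fieldType) (v : K -> rat).
Hypothesis hv : valuation3 v.

Lemma vM x y : x != 0 -> y != 0 -> v (x * y) = v x + v y.
Proof. by case: hv => vM _ _ _; apply: vM. Qed.

Lemma v1 : v 1 = 0.
Proof. by have := vM (oner_neq0 K) (oner_neq0 K); rewrite mulr1; lra. Qed.

Lemma vN1 : v (-1) = 0.
Proof.
have N1_neq0 : (-1 : K) != 0 by rewrite oppr_eq0 oner_neq0.
by have := vM N1_neq0 N1_neq0; rewrite mulrNN mulr1 v1; lra.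
Qed.

Lemma vN x : x != 0 -> v (- x) = v x.
Proof.
move=> x_neq0; rewrite -mulN1r vM ?vN1 ?add0r //.
by rewrite oppr_eq0 oner_neq0.
Qed.

Lemma vV x : x != 0 -> v x^-1 = - v x.
Proof.
by move=> x_neq0; have := vM x_neq0 (invr_neq0 x_neq0); rewrite mulfV // v1; lra.
Qed.

Lemma addr_neq0_vlt x y : x != 0 -> v x < v y -> x + y != 0.
Proof.
move=> x_neq0 vxy; apply: contraTneq vxy => /eqP.
by rewrite addrC addr_eq0 => /eqP ->; rewrite vN // ltxx.
Qed.

Lemma v_add_lt x y : x != 0 -> y != 0 -> v x < v y -> v (x + y) = v x.
Proof.
move=> x_neq0 y_neq0 vxy; case: hv => _ vD _ _.
have xy_neq0 := addr_neq0_vlt x_neq0 vxy.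
have := vD _ _ x_neq0 y_neq0 xy_neq0.
have Ny_neq0 : - y != 0 by rewrite oppr_eq0.
have := vD _ _ xy_neq0 Ny_neq0; rewrite addrK vN // => /(_ x_neq0).
by rewrite /Num.min; do 2 case: ifP => _; lra.
Qed.

Lemma natr2_unit : (2%:R : K) != 0 /\ v 2%:R = 0.
Proof.
case: hv => _ _ three_neq0 v3.
have -> : (2%:R : K) = -1 + 3%:R by rewrite (natrD K 1 2) addKr.
have N1_neq0 : (-1 : K) != 0 by rewrite oppr_eq0 oner_neq0.
have vlt : v (-1) < v 3%:R by rewrite vN1 v3.
by rewrite addr_neq0_vlt // v_add_lt // vN1.
Qed.

(* The induction writes n = 3 m + r: multiplying by 3 adds 1 to the
   valuation, while adding a unit r in {1, 2} to a multiple of 3 gives a unit. *)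
Lemma natr_neq0_v_natr n :
  (0 < n)%N -> (n%:R : K) != 0 /\ v n%:R = (logn 3 n)%:R.
Proof.
case: hv => _ _ three_neq0 v3.
elim/ltn_ind: n => n IH n_gt0.
rewrite (divn_eq n 3); set m := (n %/ 3)%N.
have m_lt : (0 < m)%N -> (m < n)%N by move=> m_gt0; rewrite ltn_Pdiv.
have [r_unit|r0] : (n %% 3 == 1 \/ n %% 3 == 2)%N \/ (n %% 3 = 0)%N.
- by have := ltn_pmod n (isT : (0 < 3)%N); lia.
- have [r_neq0 vr] : ((n %% 3)%:R : K) != 0 /\ v (n %% 3)%:R = 0.
    by case: r_unit => /eqP ->; [rewrite v1 oner_neq0 | apply: natr2_unit].
  have logn_n : logn 3 (m * 3 + n %% 3) = 0%N.
    rewrite logn_coprime // prime_coprime // dvdn_addr ?dvdn_mull //.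
    by case: r_unit => /eqP ->.
  rewrite logn_n; case: (posnP m) => [-> | m_gt0]; first by rewrite mul0n add0n.
  have [m_neq0 vm] := IH m (m_lt m_gt0) m_gt0.
  have m3_neq0 : ((m * 3)%:R : K) != 0 by rewrite natrM mulf_neq0.
  have vlt : v (n %% 3)%:R < v (m * 3)%:R.
    by rewrite natrM vM // vm v3 vr ltr_pwDr ?ler0n.
  by rewrite natrD addrC addr_neq0_vlt ?v_add_lt.
- rewrite r0 addn0; have m_gt0 : (0 < m)%N by rewrite divn_gt0 //; lia.
  have [m_neq0 vm] := IH m (m_lt m_gt0) m_gt0.
  by rewrite lognM // natrM mulf_neq0 // vM // vm v3 natrD.
Qed.

Lemma natr_neq0 n : (0 < n)%N -> (n%:R : K) != 0.
Proof. by case/natr_neq0_v_natr. Qed.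

Lemma v_natr n : (0 < n)%N -> v n%:R = (logn 3 n)%:R.
Proof. by case/natr_neq0_v_natr. Qed.

Lemma integ_neq0 (a : nat -> K) n : (integ a n.+1 != 0) = (a n != 0).
Proof. by rewrite /= mulf_eq0 invr_eq0 (negbTE (natr_neq0 (ltn0Sn n))) orbF. Qed.

Lemma v_integ (a : nat -> K) n :
  a n != 0 -> v (integ a n.+1) = v (a n) - (logn 3 n.+1)%:R.
Proof.
by move=> an_neq0; rewrite /= vM ?invr_eq0 ?natr_neq0 // vV ?natr_neq0 // v_natr.
Qed.

End Valuation.

Lemma ole_vt (K : fieldType) (v : K -> rat) c c' w u u' :
  c != 0 -> c' != 0 ->
  ole (vt v c w u) (vt v c' w u') = (v c + w * u%:R <= v c' + w * u'%:R).
Proof. by move=> c_neq0 c'_neq0; rewrite /vt (negbTE c_neq0) (negbTE c'_neq0). Qed.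

Lemma newton_pt_neq0 (K : fieldType) (v : K -> rat) m F u u0 :
  F u0 != 0 -> newton_pt v m F u -> F u != 0.
Proof.
move=> Fu0_neq0 [w [_ [_ minu]]]; apply/negP => /eqP Fu0.
by have := minu u0; rewrite /vt Fu0 eqxx (negbTE Fu0_neq0).
Qed.

Lemma Newton_range (K : fieldType) (v : K -> rat) m F (lo hi x : rat) :
  (forall u, newton_pt v m F u -> lo <= u%:R <= hi) ->
  Newton v m F x -> lo <= x <= hi.
Proof.
move=> range [u1 [u2 [t [/range /andP[lo1 hi1] /range /andP[lo2 hi2]]]]].
by move=> /andP[t_ge0 t_le1] ->; apply/andP; split; nra.
Qed.

Lemma expn3_gt L : (2 <= L)%N -> (3 * L + 2 < 3 ^ L)%N.
Proof.
elim: L => [|L IH] // L_ge2; rewrite expnS.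
by case: L IH L_ge2 => [|[|L]] IH _ //; have := IH isT; lia.
Qed.

Lemma logn3_lt U : (3 < U)%N -> (3 * logn 3 U + 2 < U)%N.
Proof.
move=> U_gt3; have := pfactor_dvdnn 3 U.
case: (logn 3 U) => [|[|L]] dvdU; first by lia.
- by rewrite expn1 in dvdU; case/dvdnP: dvdU U_gt3 => q ->; lia.
- have := dvdn_leq (ltnW (ltnW (ltnW U_gt3))) dvdU.
  by have := @expn3_gt L.+2 isT; lia.
Qed.

Section NewtonPolygonOfIntegral.
Variables (K : fieldType) (v : K -> rat) (a : nat -> K) (j : nat) (m : rat).
Hypotheses (hv : valuation3 v) (hint : forall i, a i != 0 -> 0 <= v (a i)).
Hypotheses (j_le2 : (j <= 2)%N) (aj_neq0 : a j != 0) (vaj : v (a j) = 0).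
Hypothesis m_ge : 1 / 3 <= m.

Lemma newton_pt_integ_gt0 u : newton_pt v m (integ a) u -> (0 < u)%N.
Proof.
have cj_neq0 : integ a j.+1 != 0 by rewrite (integ_neq0 hv).
by case: u => [|u] // /(newton_pt_neq0 cj_neq0); rewrite eqxx.
Qed.

Lemma newton_pt_integ_le3 u : newton_pt v m (integ a) u -> (u <= 3)%N.
Proof.
move=> pt; have cj_neq0 : integ a j.+1 != 0 by rewrite (integ_neq0 hv).
have cu_neq0 := newton_pt_neq0 cj_neq0 pt.
move: pt (newton_pt_integ_gt0 pt) cu_neq0 => [w [w_ge [_ minu]]].
case: u minu => [|n] // minu _ cu_neq0; rewrite leqNgt; apply/negP => n_gt.
have an_neq0 : a n != 0 by rewrite -(integ_neq0 hv).
have := minu j.+1; rewrite ole_vt // !(v_integ hv) // vaj.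
have := hint an_neq0.
have small_j : (j.+1 <= 2 + 3 * logn 3 j.+1)%N by case: j j_le2 => [|[|[|]]].
have : ((3 * logn 3 n.+1 + j.+1)%N%:R : rat) < (n.+1 + 3 * logn 3 j.+1)%N%:R.
  by rewrite ltr_nat; have := logn3_lt n_gt; lia.
have : 0 <= (w - 1 / 3) * (n.+1%:R - j.+1%:R).
  apply: mulr_ge0; rewrite subr_ge0; first exact: le_trans m_ge w_ge.
  by rewrite ler_nat; lia.
rewrite !natrD; nra.
Qed.

End NewtonPolygonOfIntegral.

Theorem lemma7p1 (K : closedFieldType) (v : K -> rat)
  (hv : valuation3 v) (hcomp : v_complete v) (a : nat -> K)
  (hint : forall i : nat, a i != 0 -> 0 <= v (a i))
  (hunit : (a 0%N != 0 /\ v (a 0%N) = 0) \/ (a 1%N != 0 /\ v (a 1%N) = 0)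
           \/ (a 2%N != 0 /\ v (a 2%N) = 0)) :
  forall x : rat, Newton v (1 / 3) (integ a) x -> 1 <= x <= 3.
Proof.
have [j j_le2 [aj_neq0 vaj]] : exists2 j, (j <= 2)%N & a j != 0 /\ v (a j) = 0.
  by case: hunit => [|[|]] unit; [exists 0%N | exists 1%N | exists 2%N].
move=> x; apply: Newton_range => u pt.
rewrite ler1n ler_nat (newton_pt_integ_gt0 hv aj_neq0 pt).
exact: (newton_pt_integ_le3 hv hint j_le2 aj_neq0 vaj (lexx _) pt).
Qed.
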